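(* Assume $p>2$. Let $\phi$ be a quasilinear $p$-form over $F$ with $1\in D(\phi)$ and let $L$ be a field extension of $F$. Suppose there exist a polynomial $P\in F^p[T]$ in one variable with $2\le\deg P<p$ and an element $\alpha\in D(\phi_L)\setminus\{0\}$ such that $\alpha P(b)\in D(\phi_L)$ for all $b\in D(\phi)$. Then $(\phi_L)_{an}$ is a quasi-Pfister $p$-form.
   Context: Let $p$ be a prime and $F$ a field of characteristic $p$; $F^p=\{x^p:x\in F\}$. A quasilinear $p$-form over a field $K$ of characteristic $p$ is a map $\phi\colon V\to K$ on a nonzero finite-dimensional $K$-vector space, homogeneous of degree $p$ and additive; equivalently $\phi\simeq\langle a_1,\dots,a_n\rangle\colon(\lambda_i)\mapsto\sum a_i\lambda_i^p$. $D(\phi)=\{\phi(v)\}$; $\phi_L$ is the scalar extension. $\phi_{an}$ is the unique (up to isomorphism) anisotropic form (no nonzero isotropic vectors) with $D(\phi_{an})=D(\phi)$. An $n$-fold quasi-Pfister $p$-form is $\bigotimes_{i=1}^n\langle1,a_i,\dots,a_i^{p-1}\rangle$ ($n\ge0$, 0-fold: $\langle1\rangle$). *)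

From HB Require Import structures.
From mathcomp Require Import all_boot all_order all_algebra.
Set Implicit Arguments. Unset Strict Implicit. Unset Printing Implicit Defensive.
Import Order.TTheory GRing.Theory.
Local Open Scope ring_scope.

(* A quasilinear p-form is represented (up to isometry) by its diagonal
   coefficient list a = [:: a_1; ...; a_n], i.e. <a_1,...,a_n> :
   (lambda_i) |-> sum_i a_i * lambda_i^p on K^n (n = size a). *)

Definition qform (p : nat) (K : fieldType) (a : seq K) (v : 'rV[K]_(size a)) : K :=
  \sum_(i < size a) a`_i * (v 0 i) ^+ p.

Definition qvalue (p : nat) (K : fieldType) (a : seq K) (x : K) : Prop :=
  exists v : 'rV[K]_(size a), qform p v = x.

Definition qaniso (p : nat) (K : fieldType) (a : seq K) : Prop :=
  forall v : 'rV[K]_(size a), qform p v = 0 -> v = 0.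

Definition qisometric (p : nat) (K : fieldType) (a b : seq K) : Prop :=
  exists M : 'M[K]_(size a, size b),
    [/\ row_free M, row_full M &
        forall v : 'rV[K]_(size a), qform p (v *m M) = qform p v].

(* the k-fold quasi-Pfister p-form  <<s_1,...,s_k>> =
   (x)_i <1, s_i, ..., s_i^(p-1)>  (0-fold: <1>) *)
Definition qpfister (p : nat) (K : fieldType) (s : seq K) : seq K :=
  foldr (fun a acc => [seq c * a ^+ j | c <- acc, j <- iota 0 p]) [:: 1] s.

Definition qext (F L : fieldType) (iota : {rmorphism F -> L}) (a : seq F) : seq L :=
  map iota a.

(* Let V = D(phi_L), the L^p-span of the coefficients of phi_L.  For b in
   D(phi) all translates b + t (t = 0, ..., p-1) lie in D(phi); inverting the
   Vandermonde matrix of 0, ..., p-1, whose entries lie in F_p, shows that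
   alpha * (P^(i)(b)/i!) lies in V for every i.  For i = deg P - 2 this is a
   quadratic polynomial in b with p-th power coefficients, and polarization
   (p > 2) gives alpha * b * c in V for b, c in D(phi).  Hence alpha V V is
   contained in V, and since alpha^-p lies in L^p, V is a ring.  Such a ring is
   the value set of a quasi-Pfister form: adjoin elements x outside the current
   span one at a time; 1, x, ..., x^(p-1) stay independent over it because the
   minimal polynomial of x divides (X - x)^p.  Finally, anisotropic forms with
   the same value set are isometric. *)

From Stdlib Require Import Classical.
From HB Require Import structures.
From mathcomp Require Import all_boot all_order all_algebra.
From mathcomp Require Import ring zify.
Set Implicit Arguments. Unset Strict Implicit. Unset Printing Implicit Defensive.
Import GRing.Theory.
Local Open Scope ring_scope.

Lemma bounded_choice (T : Type) (x0 : T) n (P : nat -> T -> Prop) :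
  (forall j, (j < n)%N -> exists y, P j y) ->
  exists f : nat -> T, forall j, (j < n)%N -> P j (f j).
Proof.
move=> H.
have [f Hf] := fin_all_exists (fun j : 'I_n => H j (ltn_ord j)).
exists (fun j => if insub j is Some j' then f j' else x0) => j hj.
by rewrite (insubT (fun k => k < n)%N hj) /=; exact: (Hf (Ordinal hj)).
Qed.

Definition ring_closed (K : fieldType) (S : K -> Prop) :=
  S 1 /\ forall a b, S a -> S b -> S (a * b).

Section PSpan.
Variables (K : fieldType) (p : nat).
Hypothesis pcharK : p \in [pchar K].

Lemma pchar_gt0 : (0 < p)%N. Proof. exact/prime_gt0/(pcharf_prime pcharK). Qed.

Lemma frobD (x y : K) : (x + y) ^+ p = x ^+ p + y ^+ p.
Proof. by rewrite -!(pFrobenius_autE pcharK) rmorphD. Qed.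
Lemma frobN (x : K) : (- x) ^+ p = - x ^+ p.
Proof. by rewrite -!(pFrobenius_autE pcharK) rmorphN. Qed.
Lemma frob0 : (0 : K) ^+ p = 0.
Proof. by rewrite expr0n eqn0Ngt pchar_gt0. Qed.
Lemma frob_nat n : (n%:R : K) ^+ p = n%:R.
Proof. by rewrite -(pFrobenius_autE pcharK) rmorph_nat. Qed.
Lemma frob_sum I (r : seq I) (P : pred I) (F : I -> K) :
  (\sum_(i <- r | P i) F i) ^+ p = \sum_(i <- r | P i) F i ^+ p.
Proof. by rewrite -(pFrobenius_autE pcharK) rmorph_sum. Qed.
Lemma frob_eq0 (x : K) : (x ^+ p == 0) = (x == 0).
Proof. by rewrite expf_eq0 pchar_gt0. Qed.

Lemma natr_neq0_lt m : (0 < m < p)%N -> (m%:R : K) != 0.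
Proof.
case/andP=> m0 mp; rewrite -(dvdn_pcharf pcharK).
by apply: contraTN mp => /(dvdn_leq m0); rewrite leqNgt.
Qed.

Lemma fact_neq0_lt m : (m < p)%N -> (m`!%:R : K) != 0.
Proof.
elim: m => [|m IH] hm; first by rewrite fact0 oner_eq0.
by rewrite factS natrM mulf_neq0 ?IH ?natr_neq0_lt // ltnW.
Qed.

Lemma bin_neq0_lt n k : (k <= n)%N -> (n < p)%N -> ('C(n, k)%:R : K) != 0.
Proof.
move=> kn np; apply: contraNneq (fact_neq0_lt np) => C0.
by rewrite -(bin_fact kn) natrM C0 mul0r.
Qed.

Definition pspan (a : seq K) (x : K) :=
  exists mu : nat -> K, x = \sum_(i < size a) a`_i * mu i ^+ p.
Definition pfree (a : seq K) :=
  forall mu : nat -> K, \sum_(i < size a) a`_i * mu i ^+ p = 0 ->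
    forall i, (i < size a)%N -> mu i = 0.
Definition psubspace (S : K -> Prop) :=
  [/\ S 0, (forall x y, S x -> S y -> S (x + y)) & forall c x, S x -> S (c ^+ p * x)].

Lemma qvalueE a x : qvalue p a x <-> pspan a x.
Proof.
split.
- case=> v <-; exists (fun i => if insub i is Some j then v 0 j else 0).
  by apply: eq_bigr => i _; rewrite valK.
- case=> mu ->; exists (\row_i mu i).
  by apply: eq_bigr => i _; rewrite mxE.
Qed.

Lemma qanisoE a : qaniso p a <-> pfree a.
Proof.
split=> [H mu hmu i hi | H v hv].
  have /(_ _)/rowP/(_ (Ordinal hi)) := H (\row_(j < size a) mu j).
  rewrite !mxE; apply; rewrite -[RHS]hmu.
  by apply: eq_bigr => j _; rewrite mxE.
apply/rowP => j; rewrite mxE.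
pose mu i := if insub i is Some j then v 0 j else 0.
suff /H /(_ j (ltn_ord j)) : \sum_(i < size a) a`_i * mu i ^+ p = 0 by rewrite /mu valK.
by rewrite -[RHS]hv; apply: eq_bigr => i _; rewrite /mu valK.
Qed.

Lemma pspan_nil x : pspan [::] x <-> x = 0.
Proof. by split=> [[mu ->]|->]; [rewrite big_ord0 | exists (fun _ => 0); rewrite big_ord0]. Qed.

Lemma pspan_cons c a x :
  pspan (c :: a) x <-> exists l z, pspan a z /\ x = c * l ^+ p + z.
Proof.
split.
- case=> mu ->; rewrite /= big_ord_recl /=.
  exists (mu 0%N), (\sum_(i < size a) a`_i * mu i.+1 ^+ p); split=> //.
  by exists (fun i => mu i.+1).
- case=> l [z [[mu ->] ->]].
  exists (fun i => if i is i'.+1 then mu i' else l).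
  by rewrite /= big_ord_recl.
Qed.

Lemma pspan_cat a b x :
  pspan (a ++ b) x <-> exists y z, [/\ pspan a y, pspan b z & x = y + z].
Proof.
elim: a x => [|c a IH] x /=.
  split=> [H|[y [z [/pspan_nil -> H ->]]]]; last by rewrite add0r.
  by exists 0, x; split => //; [exact/pspan_nil | rewrite add0r].
rewrite pspan_cons; split.
- case=> l [z [/IH [y1 [z1 [h1 h2 ->]]] ->]].
  exists (c * l ^+ p + y1), z1; split=> //; last by rewrite addrA.
  by apply/pspan_cons; exists l, y1.
- case=> y [z [/pspan_cons [l [y1 [h1 ->]]] h2 ->]].
  exists l, (y1 + z); split; last by rewrite addrA.
  by apply/IH; exists y1, z.
Qed.

Lemma psubspace_pspan a : psubspace (pspan a).
Proof.
split.
- by exists (fun _ => 0); rewrite big1 // => i _; rewrite frob0 mulr0.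
- move=> x y [m1 ->] [m2 ->]; exists (fun i => m1 i + m2 i).
  by rewrite -big_split; apply: eq_bigr => i _; rewrite frobD mulrDr.
- move=> c x [m ->]; exists (fun i => c * m i).
  by rewrite mulr_sumr; apply: eq_bigr => i _; rewrite exprMn mulrCA.
Qed.

Lemma pspan0 a : pspan a 0. Proof. by case: (psubspace_pspan a). Qed.

Section Subspace.
Variable S : K -> Prop.
Hypothesis Ssub : psubspace S.

Lemma psubspaceN x : S x -> S (- x).
Proof. by case: Ssub => _ _ hZ /(hZ (-1)); rewrite frobN expr1n mulN1r. Qed.

Lemma psubspaceB x y : S x -> S y -> S (x - y).
Proof. by case: Ssub => _ hD _ hx /psubspaceN; apply: hD. Qed.

Lemma psubspace_sum I (r : seq I) (P : pred I) (F : I -> K) :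
  (forall i, P i -> S (F i)) -> S (\sum_(i <- r | P i) F i).
Proof. by case: Ssub => h0 hD _ hF; elim/big_rec: _ => // i x /hF; apply: hD. Qed.

Lemma psubspace_scale_inv w x : w != 0 -> S (w ^+ p * x) -> S x.
Proof.
case: Ssub => _ _ hZ w0 /(hZ w^-1).
by rewrite mulrA -exprMn mulVf // expr1n mul1r.
Qed.

Lemma pspan_sub a : (forall x, x \in a -> S x) -> forall x, pspan a x -> S x.
Proof.
elim: a => [_ x /pspan_nil ->|c a IH ha x]; first by case: Ssub.
case/pspan_cons=> l [z [hz ->]]; case: Ssub => _ hD hZ.
apply: hD; last by apply: IH => // y hy; apply: ha; rewrite in_cons hy orbT.
by rewrite mulrC; apply: hZ; apply: ha; rewrite in_cons eqxx.
Qed.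

End Subspace.

Lemma pspan_mem a x : x \in a -> pspan a x.
Proof.
elim: a => [//|c a IH]; rewrite in_cons => /orP [/eqP ->|/IH h].
  by apply/pspan_cons; exists 1, 0; rewrite expr1n mulr1 addr0; split=> //; apply: pspan0.
by apply/pspan_cons; exists 0, x; rewrite frob0 mulr0 add0r.
Qed.

Lemma pfree_nil : pfree [::].
Proof. by move=> mu _ i. Qed.

Lemma pfree_cons c a :
  pfree (c :: a) <-> pfree a /\ (forall l z, pspan a z -> c * l ^+ p + z = 0 -> l = 0).
Proof.
split.
- move=> H; split.
  + move=> mu hmu i hi.
    have := H (fun i => if i is i'.+1 then mu i' else 0).
    rewrite /= big_ord_recl /= frob0 mulr0 add0r hmu => /(_ erefl i.+1); exact.
  + move=> l z [mu hz] hl.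
    have := H (fun i => if i is i'.+1 then mu i' else l).
    rewrite /= big_ord_recl /= -hz hl => /(_ erefl 0%N); exact.
- case=> Ha Hc mu; rewrite /= big_ord_recl /= => hmu.
  have h0 : mu 0%N = 0.
    apply: (Hc _ (\sum_(i < size a) a`_i * mu i.+1 ^+ p)) => //.
    by exists (fun i => mu i.+1).
  move: hmu; rewrite h0 frob0 mulr0 add0r => /(Ha (fun i => mu i.+1)) H.
  by case=> [|i] //= hi; apply: H.
Qed.

Lemma pfree_cat a b :
  pfree (a ++ b) <-> [/\ pfree a, pfree b &
     forall y z, pspan a y -> pspan b z -> y + z = 0 -> y = 0].
Proof.
elim: a => [|c a IH] /=.
  by split=> [h|[_ h _]] //; split=> // y z /pspan_nil ->.
rewrite (pfree_cons c (a ++ b)) IH; split.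
- case=> [[ha hb hab] hc]; split=> //.
  + apply/pfree_cons; split=> // l z hz; apply: hc.
    by apply/pspan_cat; exists z, 0; rewrite addr0; split=> //; apply: pspan0.
  + move=> y z /pspan_cons [l [y1 [hy1 ->]]] hz hyz.
    have l0 : l = 0.
      by apply: (hc l (y1 + z)); [apply/pspan_cat; exists y1, z | rewrite addrA].
    by move: hyz; rewrite l0 frob0 mulr0 !add0r; apply: hab.
- case=> /pfree_cons [ha hc] hb hab; split.
  + split=> // y z hy hz hyz; apply: (hab y z) => //.
    by apply/pspan_cons; exists 0, y; rewrite frob0 mulr0 add0r.
  + move=> l z /pspan_cat [y1 [z1 [hy1 hz1 ->]]]; rewrite addrA => h.
    apply: (hc l y1) => //; apply: (hab _ z1) => //.
    by apply/pspan_cons; exists l, y1.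
Qed.

Lemma exists_pfree_spanning (a : seq K) :
  exists b, pfree b /\ (forall x, pspan b x <-> pspan a x).
Proof.
elim: a => [|c a [b [hb hba]]]; first by exists [::]; split=> //; exact: pfree_nil.
have [hZ hD hS] := psubspace_pspan b.
have [hc|hc] := classic (pspan b c).
- exists b; split=> // x; split.
  + by move=> /hba hx; apply/pspan_cons; exists 0, x; rewrite frob0 mulr0 add0r.
  + by case/pspan_cons=> l [z [/hba hz ->]]; apply: hD => //; rewrite mulrC; apply: hS.
- exists (c :: b); split; last first.
    by move=> x; split; case/pspan_cons=> l [z [/hba hz ->]]; apply/pspan_cons; exists l, z.
  apply/pfree_cons; split=> // l z hz hl; have [//|l0] := eqVneq l 0; case: hc.
  have -> : c = (l^-1) ^+ p * (- z).
    by rewrite -[- z]add0r -hl addrK mulrCA exprVn mulVf ?mulr1 // expf_neq0.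
  exact/hS/(psubspaceN (psubspace_pspan b)).
Qed.

End PSpan.

Section Tensor.
Variables (K : fieldType) (p : nat).
Hypothesis pcharK : p \in [pchar K].

Local Notation pspan := (pspan p).
Local Notation pfree := (pfree p).

Definition ptensor (x : K) (e : seq K) := [seq c * x ^+ j | c <- e, j <- iota 0 p].

Lemma qpfister_cons x s : qpfister p (x :: s) = ptensor x (qpfister p s).
Proof. by []. Qed.

Lemma pspan_blockE (c x : K) (mu : nat -> K) :
  \sum_(i < size [seq c * x ^+ j | j <- iota 0 p])
      [seq c * x ^+ j | j <- iota 0 p]`_i * mu i ^+ p
  = \sum_(j < p) c * mu j ^+ p * x ^+ j.
Proof.
rewrite size_map size_iota; apply: eq_bigr => j _.
by rewrite (nth_map 0%N) ?size_iota // nth_iota // add0n mulrAC.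
Qed.

Lemma pspan_block (c x y : K) :
  pspan [seq c * x ^+ j | j <- iota 0 p] y <->
  exists mu : nat -> K, y = \sum_(j < p) c * mu j ^+ p * x ^+ j.
Proof. by split; case=> mu ->; exists mu; rewrite pspan_blockE. Qed.

Lemma pspan_ptensor (x : K) e y :
  pspan (ptensor x e) y <->
  exists d : nat -> K, (forall j, (j < p)%N -> pspan e (d j)) /\
                       y = \sum_(j < p) d j * x ^+ j.
Proof.
elim: e y => [|c e IH] y.
  rewrite pspan_nil; split=> [->|[d [hd ->]]].
    exists (fun _ => 0); split=> [j _|]; first exact/pspan_nil.
    by rewrite big1 // => j _; rewrite mul0r.
  by rewrite big1 // => j _; rewrite (proj1 (pspan_nil _ _) (hd j (ltn_ord j))) mul0r.
rewrite /ptensor allpairs_cons -/(ptensor x e) pspan_cat; split.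
- case=> y1 [z1 [/pspan_block [mu ->] /IH [d [hd ->]] ->]].
  exists (fun j => c * mu j ^+ p + d j); split.
    by move=> j hj; apply/pspan_cons; exists (mu j), (d j); split=> //; apply: hd.
  by rewrite -big_split; apply: eq_bigr => j _; rewrite mulrDl.
- case=> d [hd ->].
  have [f hf] := @bounded_choice (K * K) (0, 0) p
     (fun j lz => pspan e lz.2 /\ d j = c * lz.1 ^+ p + lz.2)
     (fun j hj => match proj1 (pspan_cons _ _ _ _) (hd j hj) with
                  | ex_intro l (ex_intro z h) => ex_intro _ (l, z) h end).
  exists (\sum_(j < p) c * (f j).1 ^+ p * x ^+ j), (\sum_(j < p) (f j).2 * x ^+ j).
  split.
  + by apply/pspan_block; exists (fun j => (f j).1).
  + by apply/IH; exists (fun j => (f j).2); split=> // j /hf [].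
  + rewrite -big_split; apply: eq_bigr => j _.
    by rewrite (hf j (ltn_ord j)).2 mulrDl.
Qed.

Lemma pfree_ptensor (x : K) e : pfree e ->
  (forall d : nat -> K, (forall j, (j < p)%N -> pspan e (d j)) ->
     \sum_(j < p) d j * x ^+ j = 0 -> forall j, (j < p)%N -> d j = 0) ->
  pfree (ptensor x e).
Proof.
elim: e => [|c e IH]; first by move=> _ _; exact: pfree_nil.
move=> /(pfree_cons pcharK) [hfe hc] hx.
have c0 : c != 0.
  by apply: contraPneq (hc 1 0 (pspan0 pcharK e)) => ->; rewrite mul0r addr0 => /(_ erefl)/eqP; rewrite oner_eq0.
rewrite /ptensor allpairs_cons -/(ptensor x e); apply/(pfree_cat pcharK); split.
- move=> mu; rewrite pspan_blockE size_map size_iota => hs i hi.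
  have /eqP : c * mu i ^+ p = 0.
    apply: (hx (fun j => c * mu j ^+ p)) => // j hj.
    by apply/pspan_cons; exists (mu j), 0; rewrite addr0; split=> //; apply: pspan0.
  by rewrite mulf_eq0 (negPf c0) (frob_eq0 pcharK) => /eqP.
- apply: IH => // d hd; apply: hx => j hj; apply/pspan_cons; exists 0, (d j).
  by rewrite (frob0 pcharK) mulr0 add0r; split=> //; apply: hd.
- move=> y z /pspan_block [mu ->] /pspan_ptensor [d [hd ->]] hyz.
  have mu0 j : (j < p)%N -> mu j = 0.
    move=> hj; apply: (hc (mu j) (d j) (hd j hj)); apply: (hx (fun j => c * mu j ^+ p + d j)) => //.
      by move=> i hi; apply/pspan_cons; exists (mu i), (d i); split=> //; apply: hd.
    by rewrite -[RHS]hyz -big_split; apply: eq_bigr => i _; rewrite mulrDl.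
  by rewrite big1 // => j _; rewrite mu0 // (frob0 pcharK) mulr0 mul0r.
Qed.

Lemma pspan_ptensor_monomial x e c j : (j < p)%N -> pspan e c -> pspan (ptensor x e) (c * x ^+ j).
Proof.
move=> hj hc; apply/pspan_ptensor; exists (fun i => if i == j then c else 0); split.
  by move=> i _; case: eqP => _ //; apply: pspan0.
rewrite (bigD1 (Ordinal hj)) //= eqxx big1 ?addr0 // => i hi.
rewrite ifN ?mul0r //; apply: contra hi => /eqP hij; apply/eqP/val_inj.
Qed.

Lemma pspan_ptensor_mulX x e a : pspan (ptensor x e) a -> pspan (ptensor x e) (x * a).
Proof.
have [p' hp'] : exists p', p = p'.+1 by exists p.-1; rewrite prednK // (pchar_gt0 pcharK).
case/pspan_ptensor => d [hd ->]; apply/pspan_ptensor.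
exists (fun j => if j is j'.+1 then d j' else x ^+ p * d p'); split.
  case=> [|j] hj; last exact/hd/ltnW.
  by have [_ _ hS] := psubspace_pspan pcharK e; apply/hS/hd; rewrite hp'.
rewrite mulr_sumr hp' big_ord_recr big_ord_recl /= addrC; congr (_ + _).
  by rewrite expr0 mulr1 exprS; ring.
by apply: eq_bigr => j _; rewrite exprS; ring.
Qed.

Lemma pspan_ptensor_mulC x e c a : ring_closed (pspan e) -> pspan e c ->
  pspan (ptensor x e) a -> pspan (ptensor x e) (c * a).
Proof.
move=> [_ hM] hc /pspan_ptensor [d [hd ->]]; apply/pspan_ptensor.
exists (fun j => c * d j); split=> [j hj|]; first exact/hM/hd.
by rewrite mulr_sumr; apply: eq_bigr => j _; rewrite mulrA.
Qed.

Lemma ring_closed_ptensor x e : ring_closed (pspan e) -> ring_closed (pspan (ptensor x e)).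
Proof.
move=> he; split.
  by rewrite -[1]mulr1 -(expr0 x); apply: pspan_ptensor_monomial; [exact: (pchar_gt0 pcharK) | case: he].
move=> a b /pspan_ptensor [d [hd ->]] hb.
rewrite mulr_suml; apply: (psubspace_sum (psubspace_pspan pcharK _)) => j _.
rewrite -mulrA; apply: pspan_ptensor_mulC => //; first exact: hd.
by elim: (nat_of_ord j) => [|n IH]; rewrite ?expr0 ?mul1r // exprS -mulrA; apply: pspan_ptensor_mulX.
Qed.

End Tensor.

Lemma coef_XsubC_exp (K : fieldType) (c : K) k :
  (('X - c%:P) ^+ k.+1)`_k = - (k.+1%:R * c).
Proof.
elim: k => [|k IH]; first by rewrite expr1 coefB coefX coefC /= sub0r mul1r.
rewrite exprSr mulrBr coefB coefMX coefMC /= IH.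
have := monicP (monic_exp k.+1 (monicXsubC c)).
rewrite lead_coefE size_exp_XsubC /= => ->.
by rewrite mul1r [_.+2%:R]mulrSr mulrDl mul1r opprD.
Qed.

Section PowersOfX.
Variables (K : fieldType) (p : nat) (D : K -> Prop).
Hypotheses (pcharK : p \in [pchar K]) (Dsub : psubspace p D) (Dring : ring_closed D).

Lemma psubring_exprp a : D (a ^+ p).
Proof. by rewrite -[_ ^+ p]mulr1; case: Dsub => _ _; apply; case: Dring. Qed.

Lemma psubring_nat n : D n%:R.
Proof. by rewrite -(frob_nat pcharK); apply: psubring_exprp. Qed.

Lemma psubring_expr a n : D a -> D (a ^+ n).
Proof.
case: Dring => D1 DM Da; elim: n => [|n IH]; first by rewrite expr0.
by rewrite exprS; apply: DM.
Qed.

Lemma psubring_inv a : D a -> D a^-1.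
Proof.
move=> Da; have [->|a0] := eqVneq a 0; first by rewrite invr0; case: Dsub.
have -> : a^-1 = a ^+ p.-1 * a^-1 ^+ p.
  by rewrite -{2}(prednK (pchar_gt0 pcharK)) exprVn exprS invfM mulrCA mulfV ?mulr1 // expf_neq0.
by apply: Dring.2; [apply: psubring_expr | apply: psubring_exprp].
Qed.

Lemma monic_scale_coef (g : {poly K}) : g != 0 -> (forall i, D g`_i) ->
  exists g1 : {poly K},
    [/\ g1 \is monic, size g1 = size g, forall i, D g1`_i & root g1 =1 root g].
Proof.
move=> g0 gD; have lc0 : lead_coef g != 0 by rewrite lead_coef_eq0.
exists ((lead_coef g)^-1 *: g); split.
- by rewrite monicE lead_coefZ mulVf.
- by rewrite size_scale ?invr_eq0.
- by move=> i; rewrite coefZ; apply: Dring.2 (gD i); apply: psubring_inv; rewrite lead_coefE.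
- by move=> y; rewrite rootZ ?invr_eq0.
Qed.

(* For g monic of size k.+1, [Xn_mod g k n] is a remainder of 'X^n modulo g,
   computed one multiplication by 'X at a time so that its coefficients
   visibly stay in D. *)
Fixpoint Xn_mod (g : {poly K}) (k n : nat) : {poly K} :=
  if n is n'.+1 then 'X * Xn_mod g k n' - (Xn_mod g k n')`_k.-1 *: g else 1.

Lemma Xn_modP (g : {poly K}) k : (0 < k)%N -> size g = k.+1 -> g`_k = 1 ->
  (forall i, D g`_i) ->
  forall n, [/\ (size (Xn_mod g k n) <= k)%N, forall i, D (Xn_mod g k n)`_i &
                g %| 'X^n - Xn_mod g k n].
Proof.
move=> k0 sg gk gD; have [D0 _ _] := Dsub; have [D1 DM] := Dring.
elim=> [|n [hs hD hdv]] /=.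
  split; first by rewrite size_poly1.
  - by move=> i; rewrite coefC; case: eqP.
  - by rewrite expr0 subrr dvdp0.
set r := Xn_mod g k n; split.
- apply/leq_sizeP => j hj; rewrite coefB coefXM coefZ.
  rewrite ifN -?lt0n ?(leq_trans k0 hj) //; have [->|jk] := eqVneq j k.
    by rewrite gk mulr1 subrr.
  have hj' : (k < j)%N by rewrite ltn_neqAle eq_sym jk hj.
  rewrite [r`_j.-1]nth_default ?[g`_j]nth_default ?sg ?mulr0 ?subrr //.
  by apply: leq_trans hs _; rewrite -ltnS prednK // (leq_ltn_trans _ hj').
- move=> i; rewrite coefB coefXM coefZ; apply: (psubspaceB pcharK Dsub); last exact: DM.
  by case: eqP.
- have -> : 'X^(n.+1) - ('X * r - r`_k.-1 *: g) = 'X * ('X^n - r) + (r`_k.-1)%:P * g.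
    by rewrite mul_polyC exprS; ring.
  by rewrite dvdp_add ?dvdp_mull.
Qed.

Variable x : K.

Lemma monic_dvdp_Xp_sub (g : {poly K}) : g \is monic -> (1 < size g)%N ->
  (forall i, D g`_i) -> root g x ->
  exists r : {poly K}, [/\ (size r < size g)%N, forall i, D r`_i, r.[x] = x ^+ p & g %| 'X^p - r].
Proof.
move=> gm hs gD gx; set k := (size g).-1.
have sg : size g = k.+1 by rewrite /k prednK // ltnW.
have k0 : (0 < k)%N by rewrite -ltnS -sg.
have gk : g`_k = 1 by have := monicP gm; rewrite lead_coefE sg.
have [hr rD hdv] := Xn_modP k0 sg gk gD p.
exists (Xn_mod g k p); split=> //; first by rewrite sg ltnS.
move/(congr1 (horner^~ x)): (divpK hdv).
rewrite hornerM (rootP gx) mulr0 hornerD hornerN hornerXn => /eqP.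
by rewrite eq_sym subr_eq0 => /eqP.
Qed.

Lemma monic_dvdp_XsubC_expp (g : {poly K}) : g \is monic -> (1 < size g <= p)%N ->
  (forall i, D g`_i) -> g %| ('X - x%:P) ^+ p -> D x.
Proof.
move=> gm /andP [hs1 hsp] gD /dvdp_exp_XsubCP [m _ hgm].
have eg : g = ('X - x%:P) ^+ m.
  by apply/eqP; rewrite -eqp_monic // monic_exp // monicXsubC.
move: hs1 hsp (gD m.-1); rewrite eg size_exp_XsubC; clear eg hgm.
case: m => [//|k] _ hkp.
rewrite coef_XsubC_exp => /(psubspaceN pcharK Dsub); rewrite opprK => hkx.
have k0 : (k.+1%:R : K) != 0 by rewrite (natr_neq0_lt pcharK).
rewrite -(mulKf k0 x); apply: Dring.2 hkx.
exact/psubring_inv/psubring_nat.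
Qed.

Hypothesis xD : ~ D x.

Lemma no_small_root n (g : {poly K}) : (size g <= n)%N -> (size g <= p)%N ->
  g != 0 -> (forall i, D g`_i) -> ~ root g x.
Proof.
elim: n g => [|n IH] g0 hn hgp g00 g0D g0x.
  by move: hn; rewrite leqn0 size_poly_eq0 (negPf g00).
have [g [gm sg gD gx]] : exists g : {poly K},
    [/\ g \is monic, size g = size g0, forall i, D g`_i & root g x].
  by have [g [? ? ? hr]] := monic_scale_coef g00 g0D; exists g; rewrite hr.
rewrite -sg in hn hgp; clear g0 sg g00 g0D g0x.
have hs1 : (1 < size g)%N.
  rewrite ltnNge; apply: contraPN gx => hs.
  by rewrite (size1_polyC hs) rootC -[g`_0]lead_coefC -(size1_polyC hs) (monicP gm) oner_eq0.
have [r [hr rD rx hdv]] := monic_dvdp_Xp_sub gm hs1 gD gx.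
have [r_eq|r_neq] := eqVneq r (x ^+ p)%:P.
  apply: xD; apply: (monic_dvdp_XsubC_expp gm _ gD); first by rewrite hs1.
  have pcharP : p \in [pchar {poly K}] by rewrite pchar_poly.
  by rewrite -(pFrobenius_autE pcharP) rmorphB /= !(pFrobenius_autE pcharP) -polyC_exp -r_eq.
have hsr : (size (r - (x ^+ p)%:P)%R < size g)%N.
  apply: leq_ltn_trans (size_polyD _ _) _; rewrite size_polyN gtn_max hr.
  exact: leq_ltn_trans (size_polyC_leq1 _) hs1.
apply: (IH (r - (x ^+ p)%:P)).
- by rewrite -ltnS (leq_trans hsr).
- exact: leq_trans (ltnW hsr) hgp.
- by rewrite subr_eq0.
- by move=> i; rewrite coefB coefC; apply: (psubspaceB pcharK Dsub) => //; case: eqP => _; [apply: psubring_exprp | case: Dsub].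
- by rewrite rootE hornerD hornerN hornerC rx subrr.
Qed.

Lemma Xpowers_pfree (d : nat -> K) : (forall j, (j < p)%N -> D (d j)) ->
  \sum_(j < p) d j * x ^+ j = 0 -> forall j, (j < p)%N -> d j = 0.
Proof.
move=> hd hs j hj; have [//|dj0] := eqVneq (d j) 0; exfalso.
apply: (@no_small_root p (\poly_(i < p) d i)); rewrite ?size_poly //.
- apply: contraNneq dj0 => /(congr1 (coefp j)) /=.
  by rewrite coef_poly hj coef0 => ->.
- by move=> i; rewrite coef_poly; case: ifP => hi; [exact: hd | case: Dsub].
- by rewrite rootE horner_poly hs.
Qed.

End PowersOfX.

Section Pfister.
Variables (K : fieldType) (p : nat).
Hypothesis pcharK : p \in [pchar K].

Local Notation pspan := (pspan p).
Local Notation pfree := (pfree p).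

Lemma pspan_qpfister0 (y : K) : pspan (qpfister p [::]) y <-> exists l, y = l ^+ p.
Proof.
split=> [/pspan_cons [l [z [/pspan_nil -> ->]]]|[l ->]].
  by exists l; rewrite mul1r addr0.
by apply/pspan_cons; exists l, 0; rewrite mul1r addr0; split=> //; apply/pspan_nil.
Qed.

Lemma pfree_qpfister0 : pfree (qpfister p [::] : seq K).
Proof.
apply/(pfree_cons pcharK); split=> [|l z /pspan_nil ->]; first exact: pfree_nil.
by rewrite mul1r addr0 => /eqP; rewrite (frob_eq0 pcharK) => /eqP.
Qed.

Lemma ring_closed_qpfister0 : ring_closed (pspan (qpfister p [::] : seq K)).
Proof.
split; first by apply/pspan_qpfister0; exists 1; rewrite expr1n.
move=> _ _ /pspan_qpfister0 [l ->] /pspan_qpfister0 [m ->].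
by apply/pspan_qpfister0; exists (l * m); rewrite exprMn.
Qed.

Lemma pfree_ptensor_notin (x : K) e : pfree e -> ring_closed (pspan e) -> ~ pspan e x ->
  pfree (ptensor p x e).
Proof.
move=> he hR hx; apply: (pfree_ptensor pcharK) => // d.
exact: (Xpowers_pfree pcharK (psubspace_pspan pcharK e) hR hx).
Qed.

Lemma ptensor_sub (V : K -> Prop) (x : K) e : ring_closed V -> V x ->
  (forall y, y \in e -> V y) -> forall y, y \in ptensor p x e -> V y.
Proof.
move=> [V1 VM] Vx Ve y /allpairsP [[c j] [/= /Ve Vc _ ->]].
by apply: (VM) Vc _; elim: j => [|j IH]; rewrite ?expr0 // exprS; apply: VM.
Qed.

Lemma pfister_exists (V : K -> Prop) : ring_closed V ->
  forall psi : seq K, (forall y, y \in psi -> V y) ->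
  exists s : seq K, [/\ pfree (qpfister p s), forall y, y \in qpfister p s -> V y,
                        ring_closed (pspan (qpfister p s)) &
                        forall y, y \in psi -> pspan (qpfister p s) y].
Proof.
move=> hV; elim=> [|x psi IH] hpsi.
  exists [::]; split=> //; [exact: pfree_qpfister0 | | exact: ring_closed_qpfister0].
  by move=> y; rewrite inE => /eqP ->; case: hV.
have [s [hfs hVs hRs hps]] := IH (fun y hy => hpsi y (mem_behead (hy : y \in behead (x :: psi)))).
have Vx : V x by apply: hpsi; rewrite inE eqxx.
have [hx|hx] := classic (pspan (qpfister p s) x).
  by exists s; split=> // y; rewrite inE => /predU1P [->|/hps].
exists (x :: s); rewrite qpfister_cons; split.
- exact: pfree_ptensor_notin.
- exact: ptensor_sub.
- exact: (ring_closed_ptensor pcharK).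
- move=> y; rewrite inE => /predU1P [->|/hps hy].
    have := @pspan_ptensor_monomial _ _ pcharK x _ 1 1 (prime_gt1 (pcharf_prime pcharK)) hRs.1.
    by rewrite mul1r expr1.
  have := @pspan_ptensor_monomial _ _ pcharK x _ y 0 (pchar_gt0 pcharK) hy.
  by rewrite mulr1.
Qed.

End Pfister.

Section Isometry.
Variables (K : fieldType) (p : nat).
Hypothesis pcharK : p \in [pchar K].

Lemma qform0 (a : seq K) : qform p (0 : 'rV_(size a)) = 0.
Proof. by rewrite /qform big1 // => i _; rewrite mxE (frob0 pcharK) mulr0. Qed.

Lemma qformB (a : seq K) (u v : 'rV_(size a)) : qform p (u - v) = qform p u - qform p v.
Proof.
rewrite /qform -sumrB; apply: eq_bigr => i _.
by rewrite !mxE (frobD pcharK) (frobN pcharK) mulrDr mulrN.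
Qed.

Lemma qform_mulmx (a b : seq K) (M : 'M_(size a, size b)) :
  (forall i, qform p (row i M) = a`_i) -> forall v, qform p (v *m M) = qform p v.
Proof.
move=> hM v; rewrite /qform.
transitivity (\sum_(j < size b) \sum_(i < size a) b`_j * ((v 0 i) ^+ p * (M i j) ^+ p)).
  apply: eq_bigr => j _; rewrite !mxE (frob_sum pcharK) mulr_sumr.
  by apply: eq_bigr => i _; rewrite exprMn.
rewrite exchange_big; apply: eq_bigr => i _.
rewrite -(hM i) /qform mulr_suml; apply: eq_bigr => j _; rewrite mxE; ring.
Qed.

Lemma exists_qform_mulmx (a b : seq K) : (forall y, y \in a -> pspan p b y) ->
  exists M : 'M_(size a, size b), forall v, qform p (v *m M) = qform p v.
Proof.
move=> hab.
have /fin_all_exists [f hf] : forall i : 'I_(size a), exists v : 'rV_(size b), qform p v = a`_i.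
  by move=> i; apply/qvalueE/hab/mem_nth.
exists (\matrix_(i, j) f i 0 j); apply: qform_mulmx => i.
by rewrite -hf; congr qform; apply/rowP => j; rewrite !mxE.
Qed.

Lemma qisometric_pfree (a b : seq K) : pfree p a -> pfree p b ->
  (forall y, y \in a -> pspan p b y) -> (forall y, y \in b -> pspan p a y) ->
  qisometric p a b.
Proof.
move=> /qanisoE ha /qanisoE hb hab hba.
have [M isoM] := exists_qform_mulmx hab.
have [N isoN] := exists_qform_mulmx hba.
exists M; split=> //.
- rewrite -kermx_eq0; apply/eqP/row_matrixP => i; rewrite row0.
  by apply: ha; rewrite -isoM -row_mul mulmx_ker row0 qform0.
- have NM : N *m M = 1%:M.
    apply/row_matrixP => i; rewrite !rowE mulmx1 mulmxA.
    by apply/eqP; rewrite -subr_eq0; apply/eqP/hb; rewrite qformB isoM isoN subrr.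
  rewrite /row_full eqn_leq rank_leq_col /=.
  by rewrite -{1}(mxrank1 K (size b)) -NM mxrankM_maxr.
Qed.

End Isometry.

Section PolynomialValues.
Variables (K : fieldType) (p : nat).
Hypothesis pcharK : p \in [pchar K].

(* The Vandermonde matrix of 0, 1, ..., n-1 is invertible (n <= p) and
   fixed by the Frobenius, hence so is its inverse. *)
Lemma psubspace_coef_of_values (U : K -> Prop) n (y : nat -> K) :
  psubspace p U -> (n <= p)%N ->
  (forall t, (t < n)%N -> U (\sum_(i < n) y i * t%:R ^+ i)) ->
  forall i, (i < n)%N -> U (y i).
Proof.
move=> hU hn hy i hi.
pose A := Vandermonde n (\row_(t < n) (t%:R : K)).
have hA : A \in unitmx.
  rewrite unitmxE det_Vandermonde unitfE; apply/prodf_neq0 => j _.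
  apply/prodf_neq0 => k hjk; rewrite !mxE -natrB ?(ltnW hjk) //.
  rewrite (natr_neq0_lt pcharK) // subn_gt0 hjk /=.
  exact: leq_ltn_trans (leq_subr j k) (leq_trans (ltn_ord k) hn).
have frobA : map_mx (pFrobenius_aut pcharK) A = A.
  apply/matrixP => r c; rewrite !mxE /= (pFrobenius_autE pcharK) -exprM mulnC exprM.
  by rewrite (frob_nat pcharK).
have frobAV r c : (invmx A) r c ^+ p = (invmx A) r c.
  by move: (map_invmx (pFrobenius_aut pcharK) A); rewrite frobA => /matrixP /(_ r c); rewrite mxE.
pose Y : 'rV[K]_n := \row_j y j.
have -> : y i = Y 0 (Ordinal hi) by rewrite mxE.
rewrite -[Y](mulmxK hA) mxE.
apply: (psubspace_sum hU) => t _; rewrite -frobAV mulrC.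
have [_ _ hS] := hU; apply: hS; rewrite mxE.
have := hy t (ltn_ord t); congr U; apply: eq_bigr => j _; by rewrite !mxE.
Qed.

Lemma psubspace_nderivn_horner (G : K -> Prop) (P : {poly K}) b :
  psubspace p G -> (size P <= p)%N -> (forall t, (t < size P)%N -> G P.[b + t%:R]) ->
  forall i, (i < size P)%N -> G P^`N(i).[b].
Proof.
move=> hG hP hPb; apply: (psubspace_coef_of_values hG hP) => t ht.
by rewrite -nderiv_taylor; [exact: hPb | exact: commr_nat].
Qed.

Lemma coef_nderivn_frob (P : {poly K}) m : (forall i, exists c, P`_i = c ^+ p) ->
  forall i, exists c, P^`N(m)`_i = c ^+ p.
Proof.
move=> hP i; have [c hc] := hP (m + i)%N; exists (c * 'C(m + i, m)%:R).
by rewrite coef_nderivn hc exprMn (frob_nat pcharK) mulr_natr.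
Qed.

Section Values.
Variables (W G : K -> Prop).
Hypotheses (p_gt2 : (2 < p)%N) (Wsub : psubspace p W) (Gsub : psubspace p G).

(* b^2 is recovered as Q(b) + Q(-b) - 2 Q(0), and bc by polarization. *)
Lemma psubspace_mul_of_quadratic (Q : {poly K}) :
  (size Q <= 3)%N -> Q`_2 != 0 -> (forall i, exists c, Q`_i = c ^+ p) ->
  (forall b, W b -> G Q.[b]) -> forall b c, W b -> W c -> G (b * c).
Proof.
move=> sQ Q2 hQ hQW.
have two0 : (2%:R : K) != 0 by rewrite (natr_neq0_lt pcharK) ?p_gt2.
have [c2 hc2] := hQ 2%N.
have [W0 WD _] := Wsub.
have QE b : Q.[b] = Q`_0 + Q`_1 * b + Q`_2 * b ^+ 2.
  by rewrite (horner_coef_wide _ sQ) !big_ord_recl big_ord0 /= expr0 expr1 mulr1 addr0 addrA.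
have Wsq b : W b -> G (b ^+ 2).
  move=> Wb; have c20 : 2%:R * c2 != 0 by rewrite mulf_neq0 // -(frob_eq0 pcharK) -hc2.
  apply: (psubspace_scale_inv Gsub c20).
  suff -> : (2%:R * c2) ^+ p * b ^+ 2 = Q.[b] + Q.[- b] - (Q.[0] + Q.[0]).
    have [_ GD _] := Gsub.
    by apply: (psubspaceB pcharK Gsub); apply: GD; apply: hQW => //; apply: (psubspaceN pcharK Wsub).
  by rewrite !QE exprMn (frob_nat pcharK) -hc2; ring.
move=> b c Wb Wc; apply: (psubspace_scale_inv Gsub two0).
suff -> : 2%:R ^+ p * (b * c) = (b + c) ^+ 2 - b ^+ 2 - c ^+ 2.
  by apply: (psubspaceB pcharK Gsub (psubspaceB pcharK Gsub _ _)); apply: Wsq => //; apply: WD.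
by rewrite (frob_nat pcharK); ring.
Qed.

Lemma psubspace_mul_of_poly (P : {poly K}) :
  W 1 -> (3 <= size P <= p)%N -> (forall i, exists c, P`_i = c ^+ p) ->
  (forall b, W b -> G P.[b]) -> forall b c, W b -> W c -> G (b * c).
Proof.
move=> W1 /andP [sP3 sPp] hP hPW.
have [_ WD WS] := Wsub.
have Wnat t : W t%:R by rewrite -[_%:R]mulr1 -(frob_nat pcharK); apply: WS.
pose m := (size P - 3)%N.
apply: (psubspace_mul_of_quadratic (Q := P^`N(m))).
- by apply: leq_trans (size_poly _ _) _; rewrite /m; lia.
- have Plead : P`_(m + 2) != 0.
    have -> : (m + 2 = (size P).-1)%N by rewrite /m; lia.
    by rewrite -lead_coefE lead_coef_eq0 -size_poly_gt0; lia.
  by rewrite coef_nderivn -mulr_natr mulf_neq0 // (bin_neq0_lt pcharK) ?leq_addr //; lia.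
- exact: coef_nderivn_frob.
- move=> b Wb; apply: (psubspace_nderivn_horner Gsub sPp) => [t ht|]; last by lia.
  by apply/hPW/WD.
Qed.

End Values.
End PolynomialValues.

Section Products.
Variables (K : fieldType) (p : nat).
Hypothesis pcharK : p \in [pchar K].

Lemma psubspace_mul_preim (U : K -> Prop) w : psubspace p U -> psubspace p (fun x => U (w * x)).
Proof.
case=> U0 UD UZ; split; first by rewrite mulr0.
  by move=> x y Ux Uy; rewrite mulrDr; apply: UD.
by move=> c x Ux; rewrite mulrCA; apply: UZ.
Qed.

Lemma pspan_mul_sub (a : seq K) (U : K -> Prop) : psubspace p U ->
  (forall y z, y \in a -> z \in a -> U (y * z)) ->
  forall y z, pspan p a y -> pspan p a z -> U (y * z).
Proof.
move=> hU haa y z hy hz; rewrite mulrC; move: y hy.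
apply: (pspan_sub (psubspace_mul_preim z hU)) => y ya; rewrite mulrC; move: z hz.
by apply: (pspan_sub (psubspace_mul_preim y hU)) => z za; apply: haa.
Qed.

(* alpha^p * (y * z) = alpha^(p-1) * (alpha * (y * z)), and alpha^p is a unit of K^p. *)
Lemma ring_closed_of_twisted (V : K -> Prop) alpha : psubspace p V -> V 1 -> alpha != 0 ->
  (forall y z, V y -> V z -> V (alpha * (y * z))) -> ring_closed V.
Proof.
move=> hV V1 a0 hVa; split=> // y z Vy Vz.
have aV w : V w -> V (alpha * w) by move=> Vw; rewrite -[w]mulr1; apply: hVa.
have aXV m w : V w -> V (alpha ^+ m * w).
  by elim: m => [|m IH] Vw; rewrite ?expr0 ?mul1r // exprS -mulrA; apply/aV/IH.
apply: (psubspace_scale_inv hV a0).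
by rewrite -(prednK (pchar_gt0 pcharK)) exprSr -mulrA; apply/aXV/hVa.
Qed.

End Products.

Section ScalarExtension.
Variables (p : nat) (F L : fieldType) (iota : {rmorphism F -> L}).
Hypothesis pcharF : p \in [pchar F].

Lemma pspan_map a x : pspan p a x -> pspan p (map iota a) (iota x).
Proof.
case=> mu ->; exists (fun i => iota (mu i)); rewrite rmorph_sum size_map.
by apply: eq_bigr => i _; rewrite rmorphM rmorphXn (nth_map 0).
Qed.

Lemma psubspace_rmorph_preim (V : L -> Prop) : psubspace p V -> psubspace p (fun x => V (iota x)).
Proof.
case=> V0 VD VZ; split; first by rewrite rmorph0.
  by move=> x y Vx Vy; rewrite rmorphD; apply: VD.
by move=> c x Vx; rewrite rmorphM rmorphXn; apply: VZ.
Qed.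

Lemma ring_closed_pspan_map (phi : seq F) (P : {poly F}) alpha :
  (2 < p)%N -> pspan p phi 1 -> (3 <= size P <= p)%N ->
  (forall i, exists c, P`_i = c ^+ p) -> alpha != 0 ->
  (forall b, pspan p phi b -> pspan p (map iota phi) (alpha * iota P.[b])) ->
  ring_closed (pspan p (map iota phi)).
Proof.
move=> p_gt2 phi1 sP hP a0 hval.
have pcharL := rmorph_pchar iota pcharF.
have hV := psubspace_pspan pcharL (map iota phi).
have hVa := psubspace_mul_preim alpha hV.
have hW := psubspace_pspan pcharF phi.
have hWW := psubspace_mul_of_poly pcharF p_gt2 hW (psubspace_rmorph_preim hVa) phi1 sP hP hval.
apply: (ring_closed_of_twisted pcharL hV _ a0); first by rewrite -(rmorph1 iota); apply: pspan_map.
apply: (pspan_mul_sub hVa) => _ _ /mapP [b hb ->] /mapP [c hc ->].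
by rewrite -rmorphM; apply: hWW; apply: (pspan_mem pcharF).
Qed.

End ScalarExtension.

Theorem mainTheorem11 (p : nat) (F : fieldType) (hp : p \in [pchar F]) (hp2 : (2 < p)%N)
  (phi : seq F) (hphi : (0 < size phi)%N) (h1 : qvalue p phi 1)
  (L : fieldType) (iota : {rmorphism F -> L})
  (P : {poly F}) (hPp : forall i : nat, exists c : F, P`_i = c ^+ p)
  (hdeg : (3 <= size P <= p)%N)
  (alpha : L) (halpha : qvalue p (qext iota phi) alpha) (halpha0 : alpha != 0)
  (hval : forall b : F, qvalue p phi b -> qvalue p (qext iota phi) (alpha * iota P.[b])) :
  (exists psi : seq L, [/\ (0 < size psi)%N, qaniso p psi &
       forall x, qvalue p psi x <-> qvalue p (qext iota phi) x]) /\
  (forall psi : seq L, (0 < size psi)%N -> qaniso p psi ->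
     (forall x, qvalue p psi x <-> qvalue p (qext iota phi) x) ->
     exists s : seq L, qisometric p psi (qpfister p s)).
Proof.
have pcharL := rmorph_pchar iota hp.
set V := pspan p (map iota phi).
have VE x : qvalue p (qext iota phi) x <-> V x := qvalueE p _ x.
have hR : ring_closed V.
  apply: (ring_closed_pspan_map hp hp2 _ hdeg hPp halpha0); first exact/qvalueE.
  by move=> b /qvalueE /hval /VE.
split.
- have [b [hb hbV]] := exists_pfree_spanning pcharL (map iota phi).
  exists b; split; last 1 first.
  + by move=> x; split=> [/qvalueE/hbV/VE | /VE/hbV/qvalueE].
  + case: b {hb} hbV => // /(_ 1) [_ /(_ hR.1)] /pspan_nil /eqP.
    by rewrite oner_eq0.
  + exact/qanisoE.
- move=> psi _ hpsi hpsiV.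
  have psiV y : y \in psi -> V y by move/(pspan_mem pcharL)/qvalueE/hpsiV/VE.
  have [s [hs sV _ psis]] := pfister_exists pcharL hR psiV.
  exists s; apply: (qisometric_pfree pcharL) => //; first exact/qanisoE.
  by move=> y /sV /VE /hpsiV /qvalueE.
Qed.
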